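(* If $w\ne w'$, with $w,w'\in(0,1)$, the measures $\mu_w$ and $\mu_{w'}$ on $X$ are mutually singular.
   Context: Let $\{X_n\}_{n\ge0}$ be the sequence of metric graphs where $X_0$ is a single edge identified with $[0,1]$, and $X_{n+1}$ is obtained from $X_n$ by subdividing each edge of $X_n$ into four equal parts and replacing it by a rescaled copy of the diamond graph. This diamond graph consists of six edges of equal length: edge 1 (initial segment), then two parallel paths of two edges each, namely edges 2,3 (upper path) and edges 4,5 (lower path), then edge 6 (final segment). Each edge of $X_n$ has length $4^{-n}$; collapsing the diamond to a segment gives $1$-Lipschitz maps $\pi_{n+1,n}:X_{n+1}\to X_n$, which compose to maps $\pi_{n,k}:X_n\to X_k$ with $\pi_{k,m}\circ\pi_{n,k}=\pi_{n,m}$. With $X_n$ given the length distance, $X$ is the Gromov–Hausdorff limit of $\{X_n\}$, with $1$-Lipschitz maps $\pi_{\infty,n}:X\to X_n$ satisfying $\pi_{n,k}\circ\pi_{\infty,n}=\pi_{\infty,k}$. For $w\in(0,1)$, $\mu_w$ is the unique probability measure on $X$ such that: (R1) for each $n\ge0$, the pushforward of $\mu_w$ under $\pi_{\infty,n}$ is a probability measure $\mu_{w,n}$ on $X_n$; (R2) $\mu_{w,n}$ is a multiple of arclength on each edge of $X_n$, and $\mu_{w,0}$ is Lebesgue measure on $[0,1]$; (R3) for each edge $e_n$ of $X_n$, letting $e_{n+1,i}$ ($i=1,\dots,6$, labelled as in the diamond graph) be the edges of $X_{n+1}$ whose union is $\pi_{n+1,n}^{-1}(e_n)$, one has $\mu_{w,n+1}$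 restricted to $e_{n+1,i}$ equal to $\mu_{w,n}(e_n)\,\mathcal{H}^1$ restricted to $e_{n+1,i}$ for $i=1,6$, to $w\,\mu_{w,n}(e_n)\,\mathcal{H}^1$ restricted to $e_{n+1,i}$ for $i=2,3$, and to $(1-w)\,\mu_{w,n}(e_n)\,\mathcal{H}^1$ restricted to $e_{n+1,i}$ for $i=4,5$, where $\mathcal{H}^1$ is $1$-dimensional Hausdorff measure. *)

From HB Require Import structures.
From mathcomp Require Import all_boot all_order all_algebra.
From mathcomp Require Import all_classical all_reals all_analysis.
Set Implicit Arguments. Unset Strict Implicit. Unset Printing Implicit Defensive.
Import Order.TTheory GRing.Theory Num.Theory.
Local Open Scope classical_set_scope.
Local Open Scope ring_scope.

(* Edge labels 1..6 of the diamond graph are encoded by i : 'I_6 with  *)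
(* val i = 0..5 (edge 1 = 0, edges 2,3 = 1,2 (upper path), edges 4,5  *)
(* = 3,4 (lower path), edge 6 = 5).                                    *)
(* An edge of X_n is a word a : seq 'I_6 of size n, stored with the    *)
(* FINEST letter first: the edge (i :: a) of X_{n+1} is the edge       *)
(* e_{n+1,i} of the diamond replacing the edge a of X_n.               *)
(* Every edge is oriented from its "start" (parameter 0) to its "end"  *)
(* (parameter 1), the children being oriented consistently.            *)

(* the four new vertices of a diamond: m1 = end of edge 1, top = middle *)
(* of the upper path, bot = middle of the lower path, m2 = start of 6. *)
Inductive lvtx := M1 | Top | Bot | M2.

(* vertices: the two endpoints of X_0, or a vertex created when        *)
(* subdividing the edge b.                                             *)
Inductive vtx := Root of bool | Mid of seq 'I_6 & lvtx.

(* endpoint of edge a: start (e = false) or end (e = true) *)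
Fixpoint endpt (a : seq 'I_6) (e : bool) : vtx :=
  match a with
  | [::] => Root e
  | i :: b =>
    match nat_of_ord i, e with
    | 0, false => endpt b false
    | 0, true => Mid b M1
    | 1, false => Mid b M1
    | 1, true => Mid b Top
    | 2, false => Mid b Top
    | 2, true => Mid b M2
    | 3, false => Mid b M1
    | 3, true => Mid b Bot
    | 4, false => Mid b Bot
    | 4, true => Mid b M2
    | _, false => Mid b M2
    | _, true => endpt b true
    end
  end.

(* points of the metric graphs: a vertex, or an interior point of an   *)
(* edge a at parameter t in (0,1) (arclength from the start = t/4^n).  *)
Inductive pt (R : Type) := PVtx of vtx | PIn of seq 'I_6 & R.
Arguments PVtx {R}.

Section Graphs.
Variable R : realType.

(* the points that belong to X_n *)
Definition valid (n : nat) (p : pt R) : Prop :=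
  match p with
  | PVtx (Root _) => True
  | PVtx (Mid b _) => (size b < n)%N
  | PIn a t => size a = n /\ 0 < t < 1
  end.

Definition pt_at (a : seq 'I_6) (t : R) : pt R :=
  if t == 0 then PVtx (endpt a false)
  else if t == 1 then PVtx (endpt a true)
  else PIn a t.

Definition edge (a : seq 'I_6) : set (pt R) :=
  pt_at a @` [set t : R | 0 <= t <= 1].

Definition edge_part (a : seq 'I_6) (S : set R) : set (pt R) := pt_at a @` S.

Definition edge_len (n : nat) : R := 4 ^- n.

(* length metric of X_n: infimum of the lengths of chains of edge      *)
(* segments joining p to q; the k-th segment runs along edge (a k) from *)
(* parameter (s k) to parameter (t k).                                  *)
Definition chain_ok (n : nat) (p q : pt R) (k : nat)
    (a : nat -> seq 'I_6) (s t : nat -> R) : Prop :=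
  [/\ (0 < k)%N,
      (forall i, (i < k)%N ->
         [/\ size (a i) = n, 0 <= s i <= 1 & 0 <= t i <= 1]),
      pt_at (a 0%N) (s 0%N) = p,
      pt_at (a k.-1) (t k.-1) = q &
      (forall i, (i.+1 < k)%N -> pt_at (a i) (t i) = pt_at (a i.+1) (s i.+1))].

Definition gdist (n : nat) (p q : pt R) : R :=
  inf [set l : R | exists k a s t, chain_ok n p q k a s t /\
          l = \sum_(i < k) edge_len n * `|t i - s i|].

(* offsets of the six edges of the diamond along the collapsed segment *)
Definition off (i : 'I_6) : R :=
  match nat_of_ord i with
  | 0 => 0
  | 1 | 3 => 1 / 4
  | 2 | 4 => 1 / 2
  | _ => 3 / 4
  end.

Definition lpos (m : lvtx) : R :=
  match m with M1 => 1 / 4 | Top | Bot => 1 / 2 | M2 => 3 / 4 end.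

(* pi_{n+1,n} : X_{n+1} -> X_n, collapsing each diamond to a segment *)
Definition proj (n : nat) (p : pt R) : pt R :=
  match p with
  | PIn (i :: a) t => pt_at a (off i + t / 4)
  | PIn [::] t => PIn [::] t (* not a point of X_{n+1}; irrelevant *)
  | PVtx (Root e) => PVtx (Root e)
  | PVtx (Mid b m) => if size b == n then pt_at b (lpos m) else PVtx (Mid b m)
  end.

(* relative weights of the six edges of the diamond in mu_w *)
Definition wt (w : R) (i : 'I_6) : R :=
  match nat_of_ord i with
  | 0 => 1
  | 1 | 2 => w
  | 3 | 4 => 1 - w
  | _ => 1
  end.

End Graphs.

(* The limit space X (a metric space dX on a type T whose sigma-algebra *)
(* is the Borel sigma-algebra) together with maps pi_{oo,n} realising   *)
(* X as the Gromov-Hausdorff limit of the X_n.                          *)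
Section Limit.
Variables (R : realType) (d : measure_display) (T : measurableType d).
Variable dX : T -> T -> R.
Variable pi : nat -> T -> pt R.

Definition is_metric : Prop :=
  (forall x y, 0 <= dX x y) /\ (forall x y, dX x y = 0 <-> x = y) /\
  (forall x y, dX x y = dX y x) /\
  (forall x y z, dX x z <= dX x y + dX y z).

Definition dopen (U : set T) : Prop :=
  forall x, U x -> exists2 e : R, 0 < e & [set y | dX x y < e] `<=` U.

Definition borel_sigma : Prop := @measurable d T = <<s dopen >>.

Definition complete_metric : Prop :=
  forall u : nat -> T,
    (forall e : R, 0 < e -> exists N, forall m k, (N <= m)%N -> (N <= k)%N ->
        dX (u m) (u k) < e) ->
    exists x, forall e : R, 0 < e -> exists N, forall m, (N <= m)%N ->
        dX (u m) x < e.

(* X is the GH limit of the X_n via the 1-Lipschitz maps pi_{oo,n}:     *)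
Definition GH_limit_maps : Prop :=
  is_metric /\ complete_metric /\
      (forall n x, valid n (pi n x)) /\
      (forall n p, valid n p -> exists x, pi n x = p) /\
      (forall n x y, gdist n (pi n x) (pi n y) <= dX x y) /\
      (forall n x, proj n (pi n.+1 x) = pi n x) /\
      (exists eps : nat -> R, eps @ \oo --> 0 /\
        forall n x y, `|dX x y - gdist n (pi n x) (pi n y)| <= eps n).

(* (R1)-(R3) for a probability measure mu on X with parameter w;       *)
(* pushforward mu_{w,n}(E) = mu (pi n @^-1` E).                         *)
Definition diamond_measure (w : R) (mu : probability T R) : Prop :=
  (forall S : set R, measurable S -> S `<=` [set t : R | (0 <= t <= 1)%R] ->
     mu (pi 0 @^-1` edge_part [::] S) = lebesgue_measure S) /\
  (forall n (a : seq 'I_6), size a = n -> exists c : R,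
     forall S : set R, measurable S -> S `<=` [set t : R | (0 <= t <= 1)%R] ->
       mu (pi n @^-1` edge_part a S) =
         (c * edge_len R n)%:E * lebesgue_measure S)%E /\
  (* (R3) density on the child e_{n+1,i} = (density on e_n) * wt w i *)
  (forall n (a : seq 'I_6) (i : 'I_6), size a = n ->
     forall S : set R, measurable S -> S `<=` [set t : R | (0 <= t <= 1)%R] ->
       mu (pi n.+1 @^-1` edge_part (i :: a) S) =
         (mu (pi n @^-1` edge a) * (wt w i / edge_len R n)%:E *
           ((edge_len R n.+1)%:E * lebesgue_measure S)))%E.

End Limit.

(* Let p_w(i) = wt w i / 4 be the relative weight of the i-th edge of the
   diamond.  The cylinder over an edge a = a_1 ... a_n of X_n (the points of
   X sent into its interior) is open, since a path leaving an open edge has to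
   reach one of its endpoints, and by (R3) it has mu_w-mass
   p_w(a_1) ... p_w(a_n).  On each level the two measures are thus product
   measures, with Hellinger affinity h^n where
   h = sum_i sqrt (p_w(i) p_w'(i)) < 1 because w <> w'.  The union B_n of
   the level-n cylinders that are at least as heavy for mu_w' as for mu_w
   satisfies mu_w(B_n) <= h^n and mu_w'(X \ B_n) <= h^n, so by Borel-Cantelli
   lim sup B_n is mu_w-null and its complement is mu_w'-null. *)

From HB Require Import structures.
From mathcomp Require Import all_boot all_order all_algebra.
From mathcomp Require Import all_classical all_reals all_analysis.
From mathcomp Require Import ring lra.
From Stdlib Require Import Relations.
Import Order.TTheory GRing.Theory Num.Theory.
Local Open Scope classical_set_scope.
Local Open Scope ring_scope.
Set Implicit Arguments. Unset Strict Implicit. Unset Printing Implicit Defensive.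

Section EdgeConnectivity.
Variable R : realType.
Implicit Types (n : nat) (b c : seq 'I_6) (p q : pt R).

Local Notation ord6 k := (@Ordinal 6 k isT).
Local Notation root := (PVtx (Root false) : pt R).

Definition on_common_edge n p q : Prop :=
  exists a s t, [/\ size a = n, 0 <= s <= 1, 0 <= t <= 1, pt_at a s = p & pt_at a t = q].

Definition edge_connected n : relation (pt R) := clos_trans _ (on_common_edge n).

Lemma edge_connected_trans n p q r :
  edge_connected n p q -> edge_connected n q r -> edge_connected n p r.
Proof. exact: t_trans. Qed.

Lemma edge_connected_sym n p q : edge_connected n p q -> edge_connected n q p.
Proof.
elim=> [x y [a [s [t [*]]]]|x y z _ Hyx _ Hzy]; first by apply: t_step; exists a, t, s.
exact: edge_connected_trans Hzy Hyx.
Qed.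

Lemma chain_of_edge_connected n p q :
  edge_connected n p q -> exists k a s t, chain_ok n p q k a s t.
Proof.
move=> H; apply clos_trans_t1n in H; elim: H => [x y [a [s [t [Ha Hs Ht Hx Hy]]]]|x y z].
  by exists 1%N, (fun=> a), (fun=> s), (fun=> t); split.
move=> [a [s [t [Ha Hs Ht Hx Hy]]]] _ [k [A [S [T [k0 HA HA0 HAk Hlink]]]]].
exists k.+1, (fun i => if i is j.+1 then A j else a),
  (fun i => if i is j.+1 then S j else s), (fun i => if i is j.+1 then T j else t).
split=> //.
- by case=> [|i] //= /HA.
- by case: k k0 HAk {HA Hlink}.
- by case=> [|i] /=; [rewrite Hy HA0|move/Hlink].
Qed.

Lemma pt_at0 (a : seq 'I_6) : pt_at a (0 : R) = PVtx (endpt a false).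
Proof. by rewrite /pt_at eqxx. Qed.

Lemma pt_at1 (a : seq 'I_6) : pt_at a (1 : R) = PVtx (endpt a true).
Proof. by rewrite /pt_at oner_eq0 eqxx. Qed.

Lemma pt_at_itv_oo (a : seq 'I_6) (t : R) : 0 < t < 1 -> pt_at a t = PIn a t.
Proof. by case/andP=> t0 t1; rewrite /pt_at gt_eqF // lt_eqF. Qed.

(* In X_n the edge b of X_(size b) is replaced by a path through its
   descendants 0, 1, 2 and 5. *)
Lemma edge_connected_endpt n b : (size b <= n)%N ->
  edge_connected n (PVtx (endpt b false)) (PVtx (endpt b true)).
Proof.
move/subnKC; move: (n - size b)%N => k <-{n}.
elim: k b => [|k IH] b.
  apply: t_step; exists b, 0, 1.
  by split; rewrite ?addn0 ?pt_at0 ?pt_at1 ?lexx ?ler01.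
rewrite -addSnnS.
apply: edge_connected_trans (IH (ord6 0 :: b)) _.
apply: edge_connected_trans (IH (ord6 1 :: b)) _.
exact: edge_connected_trans (IH (ord6 2 :: b)) (IH (ord6 5 :: b)).
Qed.

Lemma edge_connected_mid n b m : (size b < n)%N ->
  edge_connected n (PVtx (endpt b false)) root ->
  edge_connected n (PVtx (endpt b true)) root ->
  edge_connected n (PVtx (Mid b m)) root.
Proof.
move=> lt_bn Hf Ht.
have child j : (size (j :: b) <= n)%N by [].
have HM1 : edge_connected n (PVtx (Mid b M1)) root.
  exact: edge_connected_trans (edge_connected_sym (edge_connected_endpt (child (ord6 0)))) Hf.
case: m => //.
- exact: edge_connected_trans (edge_connected_sym (edge_connected_endpt (child (ord6 1)))) HM1.
- exact: edge_connected_trans (edge_connected_sym (edge_connected_endpt (child (ord6 3)))) HM1.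
- exact: edge_connected_trans (edge_connected_endpt (child (ord6 5))) Ht.
Qed.

Lemma edge_connected_endpt_root n c e : (size c <= n)%N ->
  edge_connected n (PVtx (endpt c e)) root.
Proof.
elim: c e => [|i c IH] e le_cn.
  have root_true := edge_connected_endpt le_cn.
  case: e; first exact: edge_connected_sym.
  exact: edge_connected_trans root_true (edge_connected_sym root_true).
have lt_cn : (size c < n)%N by [].
have Hf := IH false (ltnW lt_cn); have Ht := IH true (ltnW lt_cn).
have HM m := edge_connected_mid m lt_cn Hf Ht.
case: i {le_cn} => [[|[|[|[|[|[|j]]]]]] lt_i6] //; case: e => /=;
  first [exact: Hf | exact: Ht | exact: HM].
Qed.

Lemma edge_connected_root n p : valid n p -> edge_connected n p root.
Proof.
case: p => [[e|b m]|a t] /=.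
- by move=> _; apply: (@edge_connected_endpt_root n [::] e).
- move=> lt_bn; apply: edge_connected_mid => //;
    exact: edge_connected_endpt_root (ltnW lt_bn).
- case=> Ha t01; apply: edge_connected_trans (edge_connected_endpt_root false (eq_leq Ha)).
  apply: t_step; exists a, t, 0.
  rewrite pt_at0 pt_at_itv_oo // lexx ler01.
  by case/andP: t01 => t0 t1; rewrite !ltW.
Qed.

Lemma chain_exists n p q : valid n p -> valid n q -> exists k a s t, chain_ok n p q k a s t.
Proof.
move=> Hp Hq; apply: chain_of_edge_connected.
exact: edge_connected_trans (edge_connected_root Hp) (edge_connected_sym (edge_connected_root Hq)).
Qed.

End EdgeConnectivity.

Lemma ler_psum_cond (R : numDomainType) (I : Type) (r : seq I) (P : pred I) (F : I -> R) :
  (forall i, 0 <= F i) -> \sum_(i <- r | P i) F i <= \sum_(i <- r) F i.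
Proof. by move=> F0; rewrite [leRHS](bigID P) /= lerDl sumr_ge0. Qed.

Section OpenCylinders.
Variable R : realType.

Lemma edge_len_gt0 n : 0 < edge_len R n.
Proof. by rewrite /edge_len invr_gt0 exprn_gt0. Qed.

Lemma pt_at_PIn (b a : seq 'I_6) (s u : R) : pt_at b s = PIn a u -> b = a /\ s = u.
Proof. by rewrite /pt_at; case: ifP => _ //; case: ifP => _ // [-> ->]. Qed.

Lemma edge_part_itv_oo (a : seq 'I_6) : @edge_part R a `]0, 1[ = PIn a @` `]0, 1[%classic.
Proof.
apply: eq_imagel => t /=; rewrite in_itv /=; exact: pt_at_itv_oo.
Qed.

(* A chain leaving the interior point of parameter u along a has to run
   through a vertex to leave the edge, which costs at least min(u, 1 - u). *)
Lemma chain_ok_edge_interior n (a : seq 'I_6) (u : R) q k A S T :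
  chain_ok n (PIn a u) q k A S T ->
  \sum_(i < k) `|T i - S i| < Num.min u (1 - u) ->
  (PIn a @` `]0, 1[%classic) q.
Proof.
case=> k0 _ HA0 HAk Hlink small.
have interior x : `|x - u| < Num.min u (1 - u) -> 0 < x < 1.
  by rewrite lt_min !ltr_norml => /andP[/andP[? ?] /andP[? ?]]; apply/andP; split; lra.
have partial j : (j <= k)%N -> \sum_(i < j) `|T i - S i| < Num.min u (1 - u).
  move=> le_jk; apply: le_lt_trans small.
  by rewrite (big_ord_widen _ (fun i => `|T i - S i|) le_jk) ler_psum_cond.
have key j : (j < k)%N -> A j = a /\ `|T j - u| <= \sum_(i < j.+1) `|T i - S i|.
  elim: j => [|j IH] lt_jk.
    by have [-> <-] := pt_at_PIn HA0; rewrite big_ord1.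
  have [Aj dist_j] := IH (ltnW lt_jk).
  have Tj : 0 < T j < 1 by apply: interior; apply: le_lt_trans dist_j (partial _ (ltnW lt_jk)).
  have := Hlink j lt_jk; rewrite Aj pt_at_itv_oo // => /esym/pt_at_PIn[-> Sj].
  split=> //; rewrite big_ord_recr /= Sj addrC.
  by apply: le_trans (ler_distD (T j) _ _) _; rewrite lerD2l.
have lt_k : (k.-1 < k)%N by rewrite prednK.
have [Ak dist_k] := key _ lt_k.
have Tk : 0 < T k.-1 < 1.
  by apply: interior; apply: le_lt_trans dist_k (partial _ lt_k).
by exists (T k.-1); rewrite ?in_itv //= -HAk Ak pt_at_itv_oo.
Qed.

Variables (d : measure_display) (X : measurableType d) (dX : X -> X -> R)
  (pi : nat -> X -> pt R).

Lemma dopen_edge_interior (a : seq 'I_6) : GH_limit_maps dX pi ->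
  dopen dX (pi (size a) @^-1` edge_part a `]0, 1[).
Proof.
move=> [_ [_ [Hvalid [_ [Hlip _]]]]] x; rewrite edge_part_itv_oo /=.
case=> u; rewrite in_itv /= => u01 Hx.
set n := size a; set r := Num.min u (1 - u).
have r_gt0 : 0 < r by rewrite lt_min; case/andP: u01 => ? ?; apply/andP; split; lra.
exists (edge_len R n * r) => [|y /= dxy]; first by rewrite mulr_gt0 ?edge_len_gt0.
have [k [A [S [T Hch]]]] := chain_exists (Hvalid n x) (Hvalid n y).
have /inf_lt : [set l : R | exists k a s t, chain_ok n (pi n x) (pi n y) k a s t /\
    l = \sum_(i < k) edge_len R n * `|t i - s i|] !=set0.
  by exists (\sum_(i < k) edge_len R n * `|T i - S i|), k, A, S, T.
move/(_ _ (le_lt_trans (Hlip n x y) dxy)) => [_ [k' [A' [S' [T' [Hch' ->]]]]]].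
rewrite -mulr_sumr ltr_pM2l ?edge_len_gt0 // => small.
by rewrite -Hx in Hch'; exact: chain_ok_edge_interior Hch' small.
Qed.

End OpenCylinders.

Fixpoint words (n : nat) : seq (seq 'I_6) :=
  if n is m.+1 then [seq i :: a | i <- index_enum 'I_6, a <- words m] else [:: [::]].

Lemma size_words n a : a \in words n -> size a = n.
Proof.
elim: n a => [|n IH] a /=; first by rewrite inE => /eqP ->.
by case/allpairsPdep=> [i [b [_ /IH <- ->]]].
Qed.

Lemma uniq_words n : uniq (words n).
Proof.
elim: n => [|n IH] //=; apply: allpairs_uniq_dep => //; first exact: index_enum_uniq.
by move=> [i a] [j b] _ _ /= [-> ->].
Qed.

Lemma sum_words_prod (R : pzSemiRingType) (f : 'I_6 -> R) n :
  \sum_(a <- words n) \prod_(i <- a) f i = (\sum_i f i) ^+ n.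
Proof.
elim: n => [|n IH]; first by rewrite big_seq1 big_nil expr0.
rewrite /= big_allpairs_dep exprS mulr_suml; apply: eq_bigr => i _.
by under eq_bigr do rewrite big_cons; rewrite -mulr_sumr IH.
Qed.

Section MeanInequalities.
Variable R : rcfType.

Lemma sqrt_mul_leif_mean (p q : R) : 0 <= p -> 0 <= q ->
  Num.sqrt (p * q) <= (p + q) / 2 ?= iff (p == q).
Proof.
move=> p0 q0; have m0 : 0 <= (p + q) / 2 by rewrite divr_ge0 ?addr_ge0.
rewrite -[X in _ <= X ?= iff _](ger0_norm m0) -sqrtr_sqr.
have [le_pq_m eq_pq_m] := leif_AGM2 p q.
by split; rewrite ?ler_sqrt ?eqr_sqrt ?sqr_ge0 ?mulr_ge0.
Qed.

Lemma ler_sum_sqrt_mul (I : Type) (r : seq I) (P : pred I) (p q : I -> R) :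
  (forall i, 0 <= p i) -> (forall i, P i -> p i <= q i) ->
  \sum_(i <- r | P i) p i <= \sum_(i <- r) Num.sqrt (p i * q i).
Proof.
move=> p0 le_pq; apply: le_trans (ler_psum_cond _ _ (fun i => sqrtr_ge0 (p i * q i))).
apply: ler_sum => i Pi; have q0 := le_trans (p0 i) (le_pq i Pi).
rewrite -[leLHS](ger0_norm (p0 i)) -sqrtr_sqr ler_sqrt ?mulr_ge0 // expr2.
exact: ler_wpM2l (p0 i) _ _ (le_pq i Pi).
Qed.

End MeanInequalities.

Section HellingerAffinity.
Variable R : realType.

Definition diamond_prob (w : R) (i : 'I_6) : R := wt w i / 4.

Definition diamond_mass (w : R) (a : seq 'I_6) : R := \prod_(i <- a) diamond_prob w i.

Definition hellinger_affinity (w w' : R) : R :=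
  \sum_i Num.sqrt (diamond_prob w i * diamond_prob w' i).

Lemma diamond_prob_ge0 (w : R) i : 0 <= w <= 1 -> 0 <= diamond_prob w i.
Proof.
case/andP=> w0 w1; rewrite /diamond_prob /wt divr_ge0 //.
by case: (nat_of_ord i) => [|[|[|[|[|k]]]]]; lra.
Qed.

Lemma sum_diamond_prob (w : R) : \sum_i diamond_prob w i = 1.
Proof. by rewrite !big_ord_recl big_ord0 /diamond_prob /wt /=; field. Qed.

Lemma diamond_mass_ge0 (w : R) a : 0 <= w <= 1 -> 0 <= diamond_mass w a.
Proof. by move=> w01; rewrite prodr_ge0 // => i _; exact: diamond_prob_ge0. Qed.

Lemma sum_diamond_mass (w : R) n : \sum_(a <- words n) diamond_mass w a = 1.
Proof. by rewrite sum_words_prod sum_diamond_prob expr1n. Qed.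

Lemma sum_sqrt_diamond_mass (w w' : R) n : 0 <= w <= 1 -> 0 <= w' <= 1 ->
  \sum_(a <- words n) Num.sqrt (diamond_mass w a * diamond_mass w' a) =
    hellinger_affinity w w' ^+ n.
Proof.
move=> w01 w'01; rewrite -sum_words_prod; apply: eq_bigr => a _.
elim: a => [|i a IH]; first by rewrite /diamond_mass !big_nil mulr1 sqrtr1.
rewrite /diamond_mass !big_cons mulrACA sqrtrM; first by rewrite -IH.
by rewrite mulr_ge0 ?diamond_prob_ge0.
Qed.

Lemma hellinger_affinity_ge0 (w w' : R) : 0 <= hellinger_affinity w w'.
Proof. by rewrite sumr_ge0 // => i _; exact: sqrtr_ge0. Qed.

(* Affinity 1 would force equal weights on every edge of the diamond, in
   particular on the upper edge 2, which carries w resp. w'. *)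
Lemma hellinger_affinity_lt1 (w w' : R) : 0 <= w <= 1 -> 0 <= w' <= 1 -> w != w' ->
  hellinger_affinity w w' < 1.
Proof.
move=> w01 w'01 neq_ww'.
have := leif_sum (fun i (_ : true) =>
  sqrt_mul_leif_mean (diamond_prob_ge0 i w01) (diamond_prob_ge0 i w'01)).
rewrite -mulr_suml big_split /= !sum_diamond_prob -[1 + 1]/2%:R divff // => /lt_leif ->.
apply/forallP => /(_ (@Ordinal 6 1 isT)) /=; rewrite /diamond_prob /wt /= => /eqP eq_w.
by move/negP: neq_ww'; apply; apply/eqP; lra.
Qed.

End HellingerAffinity.

Section Cylinders.
Variables (R : realType) (d : measure_display) (X : measurableType d)
  (dX : X -> X -> R) (pi : nat -> X -> pt R).

Definition cylinder (a : seq 'I_6) : set X := pi (size a) @^-1` edge_part a `]0, 1[.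

Lemma measurable_cylinder a : borel_sigma dX -> GH_limit_maps dX pi ->
  measurable (cylinder a).
Proof. by move=> -> gh; apply: sub_gen_smallest; exact: dopen_edge_interior. Qed.

Lemma cylinder_meet_eq a b : size a = size b ->
  cylinder a `&` cylinder b !=set0 -> a = b.
Proof.
rewrite /cylinder !edge_part_itv_oo => <- [x [/= [u _ <-] [v _]]].
by case=> ->.
Qed.

Lemma measure_cylinders (mu : {measure set X -> \bar R}) n (P : pred (seq 'I_6)) :
  borel_sigma dX -> GH_limit_maps dX pi ->
  mu (\big[setU/set0]_(a <- words n | P a) cylinder a) =
    (\sum_(a <- words n | P a) mu (cylinder a))%E.
Proof.
move=> bs gh; rewrite -!(big_filter _ P) -bigcup_seq fsbig_seq ?filter_uniq ?uniq_words //.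
apply: measure_fin_bigcup => // [a b|a _]; last exact: measurable_cylinder.
rewrite /= !mem_filter => /andP[_ /size_words ha] /andP[_ /size_words hb].
by apply: cylinder_meet_eq; rewrite ha hb.
Qed.

Lemma cylinder_mass w (mu : probability X R) a : diamond_measure pi w mu ->
  mu (cylinder a) = (diamond_mass w a)%:E.
Proof.
move=> [mu_root [mu_const mu_child]].
have leb_oo : lebesgue_measure (`]0, 1[%classic : set R) = 1%:E.
  by rewrite lebesgue_measure_itv /= lte_fin ltr01 sube0.
have leb_cc : lebesgue_measure (`[0, 1]%classic : set R) = 1%:E.
  by rewrite lebesgue_measure_itv /= lte_fin ltr01 sube0.
have sub_oo : `]0, 1[%classic `<=` [set t : R | 0 <= t <= 1].
  by move=> t /=; rewrite in_itv /= => /andP[t0 t1]; rewrite !ltW.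
have sub_cc : `[0, 1]%classic `<=` [set t : R | 0 <= t <= 1].
  by move=> t /=; rewrite in_itv.
have edgeE b : edge b = edge_part b `[0, 1].
  by congr image; apply/seteqP; split=> t /=; rewrite in_itv.
suff : mu (cylinder a) = (diamond_mass w a)%:E /\
    mu (pi (size a) @^-1` edge a) = (diamond_mass w a)%:E by case.
elim: a => [|i a [_ IH]].
  rewrite /cylinder /diamond_mass big_nil edgeE.
  by rewrite !mu_root ?leb_oo ?leb_cc.
have [c Hc] := mu_const _ (i :: a) erefl.
have -> : mu (pi (size (i :: a)) @^-1` edge (i :: a)) = mu (cylinder (i :: a)).
  by rewrite edgeE /cylinder !Hc ?leb_oo ?leb_cc.
suff -> : mu (cylinder (i :: a)) = (diamond_mass w (i :: a))%:E by [].
rewrite /cylinder /= mu_child // IH leb_oo mule1 -!EFinM; congr (_%:E).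
rewrite /diamond_mass big_cons -/(diamond_mass w a) /diamond_prob /edge_len exprS invfM.
by field; rewrite expf_neq0.
Qed.

Definition heavier_cylinders (w w' : R) n : set X :=
  \big[setU/set0]_(a <- words n | diamond_mass w a <= diamond_mass w' a) cylinder a.

Section DiamondMeasures.
Hypotheses (bs : borel_sigma dX) (gh : GH_limit_maps dX pi).
Variables (w w' : R) (mu mu' : probability X R).
Hypotheses (w01 : 0 <= w <= 1) (w'01 : 0 <= w' <= 1).
Hypotheses (mu_w : diamond_measure pi w mu) (mu'_w' : diamond_measure pi w' mu').

Lemma measurable_heavier_cylinders n : measurable (heavier_cylinders w w' n).
Proof. by apply: bigsetU_measurable => a _; exact: measurable_cylinder. Qed.

Lemma measure_heavier_cylinders n :
  (mu (heavier_cylinders w w' n) <= (hellinger_affinity w w' ^+ n)%:E)%E.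
Proof.
rewrite measure_cylinders // (eq_bigr _ (fun a _ => cylinder_mass a mu_w)) sumEFin lee_fin.
rewrite -(sum_sqrt_diamond_mass n w01 w'01).
by apply: ler_sum_sqrt_mul => a; first exact: diamond_mass_ge0.
Qed.

Lemma measure_setC_heavier_cylinders n :
  (mu' (~` heavier_cylinders w w' n) <= (hellinger_affinity w w' ^+ n)%:E)%E.
Proof.
rewrite probability_setC; last exact: measurable_heavier_cylinders.
rewrite /heavier_cylinders (measure_cylinders mu') //.
rewrite (eq_bigr _ (fun a _ => cylinder_mass a mu'_w')) sumEFin -EFinB lee_fin.
rewrite -(sum_diamond_mass w' n) (bigID (fun a => diamond_mass w a <= diamond_mass w' a)) /=.
rewrite [X in X - _]addrC addrK -(sum_sqrt_diamond_mass n w01 w'01).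
under [leRHS]eq_bigr do rewrite mulrC.
apply: ler_sum_sqrt_mul => a; first exact: diamond_mass_ge0.
by rewrite -ltNge => /ltW.
Qed.

End DiamondMeasures.
End Cylinders.

Lemma mutually_singular_of_summable d (T : measurableType d) (R : realType)
    (mu nu : {measure set T -> \bar R}) (F : (set T)^nat) :
  (forall n, measurable (F n)) ->
  (\sum_(n <oo) mu (F n) < +oo)%E -> (\sum_(n <oo) nu (~` F n) < +oo)%E ->
  exists A, [/\ measurable A, mu A = 0%E & nu (~` A) = 0%E].
Proof.
move=> mF muF nuF.
have mlim (G : (set T)^nat) : (forall n, measurable (G n)) -> measurable (lim_sup_set G).
  by move=> mG; apply: bigcap_measurable => // k _; exact: bigcup_measurable.
exists (lim_sup_set F); split; [exact: mlim | exact: lim_sup_set_cvg0 |].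
have mFC n : measurable (~` F n) by exact: measurableC.
apply/eqP; rewrite eq_le measure_ge0 andbT -(lim_sup_set_cvg0 mFC nuF).
apply: le_measure; rewrite ?inE; [exact/measurableC/mlim | exact: mlim |].
rewrite /lim_sup_set setC_bigcap => x [n0 _ notF] n _.
exists (maxn n n0); first by rewrite /= leq_maxl.
by move=> Fx; apply: notF; exists (maxn n n0); rewrite //= leq_maxr.
Qed.

Lemma geometric_eseries_lty (R : realType) (h : R) : 0 <= h < 1 ->
  (\sum_(n <oo) (h ^+ n)%:E < +oo)%E.
Proof.
case/andP=> h0 h1.
suff -> : (\sum_(n <oo) (h ^+ n)%:E = ((1 - h)^-1)%:E)%E by exact: ltry.
apply: cvg_lim => //; apply: cvg_EFin; first by apply: nearW => n; rewrite /= sumEFin.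
rewrite [X in X @ _ --> _](_ : _ = series (geometric 1 h)).
  by rewrite -[X in _ --> X]mul1r; apply: cvg_geometric_series; rewrite ger0_norm.
apply/funext => n; rewrite /= sumEFin /series /=; apply: eq_bigr => i _.
by rewrite mul1r.
Qed.

Unset Implicit Arguments.
Set Strict Implicit.

Theorem lemma2p2 (R : realType) (d : measure_display) (T : measurableType d)
    (dX : T -> T -> R) (pi : nat -> T -> pt R)
    (w w' : R) (mu mu' : probability T R) :
  borel_sigma dX -> GH_limit_maps dX pi ->
  0 < w < 1 -> 0 < w' < 1 -> w != w' ->
  diamond_measure pi w mu -> diamond_measure pi w' mu' ->
  exists A : set T, [/\ measurable A, mu A = 0%E & mu' (~` A) = 0%E].
Proof.
move=> bs gh /andP[w0 w1] /andP[w'0 w'1] neq_ww' mu_w mu'_w'.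
have w01 : 0 <= w <= 1 by rewrite !ltW.
have w'01 : 0 <= w' <= 1 by rewrite !ltW.
have h01 : 0 <= hellinger_affinity w w' < 1.
  by rewrite hellinger_affinity_ge0 hellinger_affinity_lt1.
apply: (@mutually_singular_of_summable _ _ _ _ _ (heavier_cylinders pi w w')).
- exact: measurable_heavier_cylinders bs gh w w'.
- apply: le_lt_trans (geometric_eseries_lty h01).
  by apply: lee_nneseries => n _ //; have := measure_heavier_cylinders bs gh w01 w'01 mu_w n.
- apply: le_lt_trans (geometric_eseries_lty h01).
  by apply: lee_nneseries => n _ //; have := measure_setC_heavier_cylinders bs gh w01 w'01 mu'_w' n.
Qed.
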